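(* Let $n\ge2$, $k>0$, let $v\in\mathbb{S}^n(1/k)\subset\mathbb{R}^{n+1}$, and let $G$ be the isotropy subgroup of $\operatorname{Iso}(\mathbb{S}^n(1/k))$ at $v$. Let $X\in C^\infty(T\mathbb{S}^n(1/k))$ satisfy $X_G\equiv 0$. Then the function $f(p)=\langle X(p),v\rangle$ (Euclidean inner product in $\mathbb{R}^{n+1}$, with $X(p)$ regarded as a vector of $\mathbb{R}^{n+1}$) satisfies $\int_{\mathbb{S}^n(1/k)}f(x)\,dx=0$.
   Context: The groups are given left-invariant metrics induced from a fixed left-invariant metric on $\operatorname{Iso}(\mathbb{S}^n(1/k))$, with volume measure $dg$. The $G$-mean $X_G$ of a vector field $X$ is defined by $\langle X_G(p),u\rangle=\frac{1}{\operatorname{Vol}(G)}\int_G\langle (dg_p)^{-1}X(g(p)),u\rangle\,dg$ for $u\in T_p\mathbb{S}^n(1/k)$. *)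

From HB Require Import structures.
From mathcomp Require Import all_boot all_order all_algebra.
From mathcomp Require Import all_classical all_reals all_analysis.
Set Implicit Arguments. Unset Strict Implicit. Unset Printing Implicit Defensive.
Import Order.TTheory GRing.Theory Num.Theory.
Import numFieldNormedType.Exports.
Local Open Scope classical_set_scope.
Local Open Scope ring_scope.

Section Defs.
Variable R : realType.

Definition dot m (x y : 'rV[R]_m) : R := (x *m y^T) 0 0.

Definition sphere m (r : R) : set 'rV[R]_m := [set x | dot x x = r ^+ 2].
Arguments sphere m r : clear implicits.

(* orthogonal matrices; the isometry group of the sphere, acting by x |-> x *m g *)
Definition orthogonal m (g : 'M[R]_m) : Prop := g *m g^T = 1%:M.

Definition isotropy m (v : 'rV[R]_m) : set 'M[R]_m :=
  [set g | orthogonal g /\ v *m g = v].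

Definition tangent m (p : 'rV[R]_m) : set 'rV[R]_m := [set u | dot u p = 0].

Fixpoint iter_derive m (dirs : seq 'rV[R]_m) (f : 'rV[R]_m -> 'rV[R]_m)
  : 'rV[R]_m -> 'rV[R]_m :=
  match dirs with
  | [::] => f
  | d :: ds => fun x => derive (iter_derive ds f) x d
  end.

Definition smooth m (f : 'rV[R]_m -> 'rV[R]_m) : Prop :=
  forall (dirs : seq 'rV[R]_m) (x : 'rV[R]_m),
    differentiable (iter_derive dirs f) x.

Definition borelM m : Type := g_sigma_algebraType (@open 'M[R]_m).
Definition borelV m : Type := g_sigma_algebraType (@open 'rV[R]_m).

Definition haar_prob m (v : 'rV[R]_m)
  (mu : probability (borelM m) R) : Prop :=
  mu (~` isotropy v) = 0%E /\
  forall g : 'M[R]_m, isotropy v g ->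
    forall A : set (borelM m), measurable A ->
      mu ((fun h : 'M[R]_m => g *m h) @^-1` A) = mu A.

(* a nonzero finite O(m)-invariant Borel measure carried by the sphere:
   a positive multiple of the Riemannian volume measure of the sphere *)
Definition sphere_measure m (r : R)
  (sigma : {finite_measure set (borelV m) -> \bar R}) : Prop :=
  sigma (~` @sphere m r) = 0%E /\ (0 < sigma setT)%E /\
  forall g : 'M[R]_m, orthogonal g ->
    forall A : set (borelV m), measurable A ->
      sigma ((fun x : 'rV[R]_m => x *m g) @^-1` A) = sigma A.

(* X_G == 0 : the G-mean of X vanishes at every point of the sphere *)
Definition G_mean_zero m (r : R) (v : 'rV[R]_m)
  (mu : probability (borelM m) R) (X : 'rV[R]_m -> 'rV[R]_m) : Prop :=
  forall p : 'rV[R]_m, sphere m r p ->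
    forall u : 'rV[R]_m, tangent p u ->
      (\int[mu]_(g in (isotropy v : set (borelM m)))
          (dot (X (p *m g) *m g^T) u)%:E = 0)%E.

End Defs.
Arguments sphere {R} m r.

From Pilot Require Import Defs.
From HB Require Import structures.
From mathcomp Require Import all_boot all_order all_algebra.
From mathcomp Require Import all_classical all_reals all_analysis.
From mathcomp Require Import measurable_realfun.
Set Implicit Arguments.
Unset Strict Implicit.
Unset Printing Implicit Defensive.
Import Order.TTheory GRing.Theory Num.Theory.
Import numFieldNormedType.Exports.
Local Open Scope classical_set_scope.
Local Open Scope ring_scope.

(* Fix p on the sphere and put f := <X(.), v>. Every g in G fixes v and X(pg)
   is tangent at pg, so testing the G-mean of X at p against the tangent
   vector v - (<v,p>/|p|^2) p gives the G-average of g |-> f(pg): X_G = 0 makes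
   all these averages vanish. Integrating them over the sphere and exchanging
   the integrals (Fubini), the O(n+1)-invariance of the volume turns the inner
   integral into the integral of f itself, weighted by the Haar mass 1 of G. *)

Section dot_orthogonal.
Variables (R : realType) (m : nat).
Implicit Types (x y u : 'rV[R]_m) (g : 'M[R]_m).

Lemma dotC x y : dot x y = dot y x.
Proof. by rewrite /dot -[y *m x^T]trmxK trmx_mul trmxK [in RHS]mxE. Qed.

Lemma dotBZr x y u (c : R) : dot x (y - c *: u) = dot x y - c * dot x u.
Proof. by rewrite /dot linearB linearZ /= mulmxBr -scalemxAr !mxE. Qed.

Lemma dot_mulmx_trmx x u g : dot (x *m g^T) u = dot x (u *m g).
Proof. by rewrite /dot trmx_mul mulmxA. Qed.

Lemma dot_orthogonal x y g :
  Defs.orthogonal g -> dot (x *m g) (y *m g) = dot x y.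
Proof. by move=> og; rewrite -dot_mulmx_trmx -mulmxA og mulmx1. Qed.

Lemma sphere_mulmx r x g :
  Defs.orthogonal g -> sphere m r (x *m g) = sphere m r x.
Proof. by move=> og; rewrite /sphere /= dot_orthogonal. Qed.

Lemma preimage_sphere_mulmx r g :
  Defs.orthogonal g -> (fun x => x *m g) @^-1` sphere m r = sphere m r.
Proof. by move=> og; apply/seteqP; split => x; rewrite /= sphere_mulmx. Qed.

End dot_orthogonal.

Section matrix_continuity.
Variables (R : numFieldType) (T : topologicalType).

Lemma continuous_mx a b (F : T -> 'M[R]_(a, b)) :
  (forall i j, continuous (fun t => F t i j)) -> continuous F.
Proof.
move=> Fc t; apply/cvg_ballP => e e0.
have : \forall s \near t, forall ij : 'I_a * 'I_b,
    ball (F t ij.1 ij.2) e (F s ij.1 ij.2).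
  by apply: filter_forall => -[i j]; exact: (cvg_ball (Fc i j t)).
by apply: filterS => s Fs; split => // i j; exact: (Fs (i, j)).
Qed.

Lemma continuous_mxE a b (F : T -> 'M[R]_(a, b)) i j :
  continuous F -> continuous (fun t => F t i j).
Proof.
move=> Fc t.
by apply: (@continuous_comp _ _ _ F (fun M : 'M[R]_(a, b) => M i j));
  [exact: Fc|exact: coord_continuous].
Qed.

Lemma continuous_trmx a b (F : T -> 'M[R]_(a, b)) :
  continuous F -> continuous (fun t => (F t)^T).
Proof.
move=> Fc; apply: continuous_mx => i j.
by under eq_fun do rewrite mxE; exact: continuous_mxE.
Qed.

Lemma continuous_mulmx a b c (F : T -> 'M[R]_(a, b)) (G : T -> 'M[R]_(b, c)) :
  continuous F -> continuous G -> continuous (fun t => F t *m G t).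
Proof.
move=> Fc Gc; apply: continuous_mx => i j; under eq_fun do rewrite mxE.
apply: (@continuous_big R^o _ +%R 0 xpredT add_continuous) => k _ t.
by apply: continuousM; apply: continuous_mxE.
Qed.

End matrix_continuity.

Section sphere_topology.
Variables (R : realType) (m : nat).

Lemma continuous_dot (F G : 'rV[R]_m -> 'rV[R]_m) :
  continuous F -> continuous G -> continuous (fun x => dot (F x) (G x)).
Proof.
move=> Fc Gc; apply: (@continuous_mxE _ _ 1 1 (fun x => F x *m (G x)^T)).
exact/continuous_mulmx/continuous_trmx.
Qed.

Lemma closed_sphere (r : R) : closed (sphere m r).
Proof.
have dotxx_cont : continuous (fun x : 'rV[R]_m => dot x x).
  by apply: continuous_dot => x; exact: cvg_id.
have -> : sphere m r = (fun x => dot x x) @^-1` [set r ^+ 2] by [].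
by apply: preimage_closed; [move=> x _; exact: dotxx_cont|exact: closed_eq].
Qed.

Lemma sphere_norm_le (r : R) x : sphere m r x -> `|x| <= `|r|.
Proof.
move=> Sx; change (mx_norm x <= `|r|); rewrite mx_normrE.
apply: bigmax_le => // -[i j] _ /=; rewrite (ord1 i).
rewrite -ler_sqr ?nnegrE // !real_normK ?num_real // -Sx /dot mxE.
rewrite (bigD1 j) //= mxE -expr2.
by rewrite lerDl; apply: sumr_ge0 => k _; rewrite mxE -expr2 sqr_ge0.
Qed.

Lemma compact_sphere (r : R) : compact (sphere m r).
Proof.
apply: bounded_closed_compact; last exact: closed_sphere.
rewrite /bounded_set /bounded_near.
apply: filterS (nbhs_pinfty_ge (num_real `|r|)) => M rM x Sx.
exact: le_trans (sphere_norm_le Sx) rM.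
Qed.

Lemma closed_isotropy (v : 'rV[R]_m) : closed (isotropy v).
Proof.
have closed1 (a b : nat) (A : 'M[R]_(a, b)) : closed [set A].
  exact/accessible_closed_set1/hausdorff_accessible/norm_hausdorff.
apply: closedI; apply: preimage_closed (closed1 _ _ _) => g _.
  by apply: continuous_mulmx; [|apply: continuous_trmx]; move=> ?;
    exact: cvg_id.
by apply: continuous_mulmx; [exact: cst_continuous|move=> ?; exact: cvg_id].
Qed.

End sphere_topology.

Lemma compact_continuous_bounded (R : realType) (T : topologicalType)
    (A : set T) (f : T -> R) :
  compact A -> continuous f -> exists B, forall x, A x -> `|f x| <= B.
Proof.
move=> cA fc.
have /compact_bounded[M [_ fAM]] :=
  continuous_compact (continuous_subspaceT fc) cA.
by exists (M + 1) => x Ax; apply: fAM; [rewrite ltrDl|exists x].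
Qed.

Local Notation borel T := (g_sigma_algebraType (@open T)).

Section borel_sets.
Variable T : ptopologicalType.

Lemma open_borel (A : set T) : open A -> measurable (A : set (borel T)).
Proof. exact: sub_gen_smallest. Qed.

Lemma closed_borel (A : set T) : closed A -> measurable (A : set (borel T)).
Proof.
move=> cA; rewrite -[A]setCK; apply: measurableC.
by apply: open_borel; exact: closed_openC.
Qed.

Lemma continuous_borel_measurable (U : ptopologicalType) (f : T -> U) :
  continuous f -> measurable_fun setT (f : borel T -> borel U).
Proof.
move=> /continuousP fc.
apply: (@measurability _ _ (borel T) (borel U) setT f (@open U)) => //.
move=> _ [B oB <-].
by rewrite setTI; apply: open_borel; exact: fc.
Qed.

Lemma continuous_borel_measurable_real (R : realType) (f : T -> R) :
  continuous f -> measurable_fun setT (f : borel T -> R).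
Proof.
move=> /continuousP fc; apply: (measurability _ (RGenOpens.measurableE R)).
move=> _ [_ [a [b ->] <-]]; rewrite setTI; apply: open_borel.
by apply: fc; exact: interval_open.
Qed.

End borel_sets.

Lemma ball_rat_matrix (R : realType) a b (p : 'M[R]_(a, b)) (e : R) : 0 < e ->
  exists q : 'M[rat]_(a, b), ball p e (map_mx ratr q).
Proof.
move=> e0.
have /choice[q pq] : forall ij : 'I_a * 'I_b,
    exists q : rat, `|p ij.1 ij.2 - ratr q| < e.
  move=> ij; have pe : p ij.1 ij.2 - e < p ij.1 ij.2 + e.
    by rewrite ltrBlDr -addrA ltrDl addr_gt0.
  have [q] := rat_in_itvoo pe.
  by rewrite in_itv /= => qe; exists q; rewrite ltr_distlC.
exists (\matrix_(i, j) q (i, j)); split => // i j.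
by rewrite !mxE; exact: (pq (i, j)).
Qed.

Section borel_matrix_product.
Variables (R : realType) (a b c d : nat).
Local Notation MM := ('M[R]_(a, b) * 'M[R]_(c, d))%type.

(* Second countability: W is the union of the products of balls with rational
   centres and radii 1/(j+1) that are contained in W. *)
Lemma open_measurable_prod (W : set MM) :
  open W -> measurable (W : set (borel 'M[R]_(a, b) * borel 'M[R]_(c, d))).
Proof.
move=> oW.
pose box (t : 'M[rat]_(a, b) * 'M[rat]_(c, d) * nat) : set MM :=
  ball (map_mx (@ratr R) t.1.1) t.2.+1%:R^-1 `*`
  ball (map_mx (@ratr R) t.1.2) t.2.+1%:R^-1.
have -> : W = \bigcup_(t in [set t | box t `<=` W]) box t.
  apply/seteqP; split => [[p g] Wpg|z [t boxW /boxW //]].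
  have /nbhs_ballP[e e0 eW] := oW _ Wpg.
  have [j je] : exists j : nat, j.+1%:R^-1 < e / 2.
    have e20 : 0 < e / 2 by rewrite divr_gt0.
    exact: filter_ex (@near_infty_natSinv_lt R (PosNum e20)).
  have j0 : 0 < j.+1%:R^-1 :> R by rewrite invr_gt0.
  have [q1 pq1] := ball_rat_matrix p j0.
  have [q2 gq2] := ball_rat_matrix g j0.
  have jje : j.+1%:R^-1 + j.+1%:R^-1 <= e.
    by rewrite [leRHS](splitr e) lerD ?ltW.
  have boxW : box (q1, q2, j) `<=` W.
    move=> -[p' g'] [/= pp' gg']; apply: eW; split => /=.
      by apply: (le_ball jje); exact: ball_triangle pq1 pp'.
    by apply: (le_ball jje); exact: ball_triangle gq2 gg'.
  by exists (q1, q2, j) => //; split; apply: ball_sym.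
rewrite bigcup_mkcond; apply: countable_bigcupT_measurable => [|t].
  exact: countableP.
case: ifP => _; last exact: measurable0.
by apply: measurableX; apply: open_borel; exact: ball_open.
Qed.

Lemma continuous_measurable_prod (F : MM -> R) : continuous F ->
  measurable_fun setT (F : borel 'M[R]_(a, b) * borel 'M[R]_(c, d) -> R).
Proof.
move=> /continuousP Fc; apply: (measurability _ (RGenOpens.measurableE R)).
move=> _ [_ [x [y ->] <-]]; rewrite setTI; apply: open_measurable_prod.
by apply: Fc; exact: interval_open.
Qed.

End borel_matrix_product.

Lemma smooth_continuous (R : realType) m (X : 'rV[R]_m -> 'rV[R]_m) :
  smooth X -> continuous X.
Proof. by move=> Xs x; apply: differentiable_continuous; exact: (Xs [::]). Qed.

Lemma continuous_measurable_mulmx (R : realType) a b c (f : 'M[R]_(a, c) -> R) :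
  continuous f ->
  measurable_fun setT
    (fun z : borel 'M[R]_(a, b) * borel 'M[R]_(b, c) => f (z.1 *m z.2)).
Proof.
move=> fc.
have mulc : continuous (fun z : 'M[R]_(a, b) * 'M[R]_(b, c) => z.1 *m z.2).
  by apply: continuous_mulmx => -[x g]; [exact: cvg_fst|exact: cvg_snd].
apply: continuous_measurable_prod => z.
exact: continuous_comp (mulc z) (fc _).
Qed.

Local Open Scope ereal_scope.

Lemma probability_setC_eq0 d (T : measurableType d) (R : realType)
    (P : probability T R) (A : set T) :
  measurable A -> P (~` A) = 0 -> P A = 1.
Proof.
move=> mA PCA0; have := probability_setC P mA; rewrite PCA0 => /esym/eqP.
by rewrite sube_eq ?fin_num_measure // add0e => /eqP.
Qed.

Lemma integral_comp_measure_preserving d (T : measurableType d) (R : realType)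
    (mu : {measure set T -> \bar R}) (phi : T -> T) (D : set T)
    (f : T -> \bar R) :
  measurable D -> measurable_fun setT phi ->
  (forall A, measurable A -> mu (phi @^-1` A) = mu A) -> phi @^-1` D = D ->
  measurable_fun setT f -> mu.-integrable D (f \o phi) ->
  \int[mu]_(x in D) f (phi x) = \int[mu]_(x in D) f x.
Proof.
move=> mD mphi mu_phi phiD mf intf; rewrite -phiD in intf.
have := integral_pushforward mphi mf intf mD; rewrite phiD => <-.
by apply: eq_measure_integral => A mA _; exact: mu_phi.
Qed.

Section fubini_setX.
Context d1 d2 (T1 : measurableType d1) (T2 : measurableType d2) (R : realType).
Variables (m1 : {finite_measure set T1 -> \bar R})
  (m2 : {finite_measure set T2 -> \bar R}).
Variables (A1 : set T1) (A2 : set T2) (F : T1 * T2 -> R) (B : R).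
Hypotheses (mA1 : measurable A1) (mA2 : measurable A2).
Hypothesis mF : measurable_fun setT F.
Hypothesis FB : forall x y, A1 x -> A2 y -> (`|F (x, y)| <= B)%R.

Let H z := (\1_(A1 `*` A2) z * F z)%R.

Let integrable_H : (m1 \x m2).-integrable setT (EFin \o H).
Proof.
have m12_fin : (m1 \x m2) ([set: T1] `*` [set: T2]) < +oo.
  rewrite product_measure1E //.
  apply: lte_mul_pinfty; [exact: measure_ge0|exact: fin_num_measure|].
  by have /fin_numPlt/andP[] := fin_num_measure m2 _ measurableT.
apply: measurable_bounded_integrable => //.
- by rewrite -setXTT.
- by apply: measurable_funM => //; apply: measurable_indic; exact: measurableX.
apply: filterS (nbhs_pinfty_ge (num_real `|B|)) => M BM -[x y] _.
rewrite /= /H indicE in_setX.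
have [/set_mem A1x|] /= := boolP (x \in A1); last first.
  by rewrite mul0r normr0 (le_trans _ BM).
have [/set_mem A2y|] /= := boolP (y \in A2); last first.
  by rewrite mul0r normr0 (le_trans _ BM).
by rewrite mul1r (le_trans (FB A1x A2y)) // (le_trans (ler_norm _) BM).
Qed.

Let H_xsection x : \int[m2]_y (EFin \o H) (x, y) =
  ((fun x => \int[m2]_(y in A2) (F (x, y))%:E) \_ A1) x.
Proof.
rewrite patchE; case: ifPn => A1x; last first.
  apply: integral0_eq => y _.
  by rewrite /= /H indicE in_setX (negbTE A1x) mul0r.
rewrite [RHS]integral_mkcond; apply: eq_integral => y _.
by rewrite patchE /= /H indicE in_setX A1x; case: ifP; rewrite ?mul1r ?mul0r.
Qed.

Let H_ysection y : \int[m1]_x (EFin \o H) (x, y) =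
  ((fun y => \int[m1]_(x in A1) (F (x, y))%:E) \_ A2) y.
Proof.
rewrite patchE; case: ifPn => A2y; last first.
  apply: integral0_eq => x _.
  by rewrite /= /H indicE in_setX (negbTE A2y) andbF mul0r.
rewrite [RHS]integral_mkcond; apply: eq_integral => x _.
rewrite patchE /= /H indicE in_setX A2y andbT.
by case: ifP; rewrite ?mul1r ?mul0r.
Qed.

Lemma fubini_setX_bounded :
  \int[m1]_(x in A1) \int[m2]_(y in A2) (F (x, y))%:E =
  \int[m2]_(y in A2) \int[m1]_(x in A1) (F (x, y))%:E.
Proof.
rewrite integral_mkcond [RHS]integral_mkcond.
under eq_integral do rewrite -H_xsection.
under [RHS]eq_integral do rewrite -H_ysection.
exact: Fubini integrable_H.
Qed.

End fubini_setX.

Lemma compact_continuous_integrable (R : realType) a b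
    (sigma : {finite_measure set (borel 'M[R]_(a, b)) -> \bar R})
    (A : set 'M[R]_(a, b)) (f : 'M[R]_(a, b) -> R) :
  compact A -> continuous f ->
  sigma.-integrable (A : set (borel 'M[R]_(a, b))) (EFin \o f).
Proof.
move=> cA fc; have [B fB] := compact_continuous_bounded cA fc.
have mA : measurable (A : set (borel 'M[R]_(a, b))).
  by apply: closed_borel; apply: compact_closed cA; exact: norm_hausdorff.
apply: measurable_bounded_integrable => //.
- by have /fin_numPlt/andP[] := fin_num_measure sigma _ mA.
- by apply: measurable_funTS; exact: continuous_borel_measurable_real.
apply: filterS (nbhs_pinfty_ge (num_real B)) => M BM x Ax.
exact: le_trans (fB x Ax) BM.
Qed.

Lemma integral_sphere_mulmx (R : realType) m (r : R)
    (sigma : {finite_measure set (borelV R m) -> \bar R})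
    (f : 'rV[R]_m -> R) (g : 'M[R]_m) :
  sphere_measure r sigma -> continuous f -> Defs.orthogonal g ->
  \int[sigma]_(x in (sphere m r : set (borelV R m))) (f (x *m g))%:E =
  \int[sigma]_(x in (sphere m r : set (borelV R m))) (f x)%:E.
Proof.
move=> [_ [_ sigma_inv]] fc og.
have mulg_cont : continuous (fun x : 'rV[R]_m => x *m g).
  by apply: continuous_mulmx => [x|]; [exact: cvg_id|exact: cst_continuous].
apply: (integral_comp_measure_preserving (mu := sigma) (phi := fun x => x *m g)
  (f := EFin \o f)).
- by apply: closed_borel; exact: closed_sphere.
- exact: continuous_borel_measurable mulg_cont.
- exact: sigma_inv og.
- exact: preimage_sphere_mulmx og.
- by apply/measurable_EFinP; exact: continuous_borel_measurable_real fc.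
have fgc : continuous (f \o (fun x => x *m g)).
  by move=> x; apply: continuous_comp; [exact: mulg_cont|exact: fc].
rewrite -compA.
exact: compact_continuous_integrable (@compact_sphere R m r) fgc.
Qed.

Lemma G_mean_zero_integral_dot (R : realType) m (r : R) (v : 'rV[R]_m)
    (mu : probability (borelM R m) R) (X : 'rV[R]_m -> 'rV[R]_m)
    (p : 'rV[R]_m) :
  r != 0%R -> (forall q, sphere m r q -> tangent q (X q)) ->
  G_mean_zero r v mu X -> sphere m r p ->
  \int[mu]_(g in (isotropy v : set (borelM R m))) (dot (X (p *m g)) v)%:E = 0.
Proof.
move=> r0 Xt XG Sp.
pose u := (v - (dot v p / r ^+ 2) *: p)%R.
have Tu : tangent p u.
  by rewrite /tangent /= dotC dotBZr Sp (dotC p v) mulfVK ?subrr ?expf_neq0.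
rewrite -(XG p Sp u Tu); apply: eq_integral => g /[!inE] -[og vg].
have Tpg : dot (X (p *m g)) (p *m g) = 0%R by apply: Xt; rewrite sphere_mulmx.
congr EFin; rewrite dot_mulmx_trmx mulmxBl -scalemxAl vg dotBZr Tpg.
by rewrite mulr0 subr0.
Qed.

Local Close Scope ereal_scope.

Theorem lemma3p2 (R : realType) (n : nat) (hn : (2 <= n)%N) (k : R) (hk : 0 < k)
  (v : 'rV[R]_n.+1) (hv : sphere n.+1 k^-1 v)
  (mu : probability (borelM R n.+1) R) (hmu : haar_prob v mu)
  (sigma : {finite_measure set (borelV R n.+1) -> \bar R})
  (hsigma : sphere_measure k^-1 sigma)
  (X : 'rV[R]_n.+1 -> 'rV[R]_n.+1) (hXs : smooth X)
  (hXt : forall p, sphere n.+1 k^-1 p -> tangent p (X p))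
  (hXG : G_mean_zero k^-1 v mu X) :
  (\int[sigma]_(x in (sphere n.+1 k^-1 : set (borelV R n.+1)))
      (dot (X x) v)%:E = 0)%E.
Proof.
pose f x := dot (X x) v.
have fc : continuous f.
  by apply: continuous_dot; [exact: smooth_continuous|exact: cst_continuous].
have [B fB] := compact_continuous_bounded (@compact_sphere R n.+1 k^-1) fc.
have mS : measurable (sphere n.+1 k^-1 : set (borelV R n.+1)).
  by apply: closed_borel; exact: closed_sphere.
have mG : measurable (isotropy v : set (borelM R n.+1)).
  by apply: closed_borel; exact: closed_isotropy.
have FB x g : sphere n.+1 k^-1 x -> isotropy v g -> `|f (x *m g)| <= B.
  by move=> Sx [og _]; apply: fB; rewrite sphere_mulmx.
have := fubini_setX_bounded sigma mu mS mG (continuous_measurable_mulmx fc) FB.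
have k1_neq0 : k^-1 != 0 by rewrite invr_neq0 // gt_eqF.
under eq_integral => x /set_mem Sx do
  rewrite (G_mean_zero_integral_dot k1_neq0 hXt hXG Sx).
under [RHS]eq_integral => g /set_mem [og _] do
  rewrite (integral_sphere_mulmx hsigma fc og).
have muG : mu (isotropy v) = 1%E by exact: probability_setC_eq0 mG hmu.1.
rewrite integral0 integral_cst // => /esym I0.
(* [mu] occurs in [I0] through a different measure coercion, hence the
   rewrite in the reverse direction, closed by conversion *)
by rewrite -[LHS]mule1 -muG.
Qed.
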